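(* For any ultradiscrete ballean $(X,\mathcal E_X)$ we have $\operatorname{add}(\mathcal B_X)<\operatorname{cof}(\mathcal B_X)$.
   Context: A ballean is a pair $(X,\mathcal E_X)$ where $X$ is a set and $\mathcal E_X$ is a family of subsets of $X\times X$ (entourages) such that: each $E\in\mathcal E_X$ contains the diagonal $\Delta_X$; for any $E,F\in\mathcal E_X$ there is $D\in\mathcal E_X$ with $E\circ F^{-1}\subset D$; and $\bigcup\mathcal E_X=X\times X$. For $E\in\mathcal E_X$, $x\in X$, $A\subset X$: $E[x]=\{y:(x,y)\in E\}$, $E[A]=\bigcup_{a\in A}E[a]$. $B\subset X$ is bounded if $B\subset E[x]$ for some $E\in\mathcal E_X$, $x\in X$; $\mathcal B_X$ is the family of bounded sets, ordered by inclusion. Sets $A,B$ are asymptotically disjoint if $E[A]\cap E[B]\in\mathcal B_X$ for all $E\in\mathcal E_X$. $X$ is ultranormal if it contains no two unbounded asymptotically disjoint sets. $X$ is discrete if $X$ is unbounded and for every $E\in\mathcal E_X$ there is a bounded $B_E\subset X$ with $E[x]=\{x\}$ for all $x\in X\setminus B_E$; ultradiscrete means discrete and ultranormal. For a poset $P$, $\operatorname{add}(P)$ is the least cardinality of a subset without upper bound and $\operatorname{cof}(P)$ the least cardinality of a cofinal subset. *)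

From Stdlib Require Import Classical.

Set Implicit Arguments.

Definition set (X : Type) := X -> Prop.
Definition relation (X : Type) := X -> X -> Prop.

Definition subset {X : Type} (A B : set X) : Prop := forall x, A x -> B x.
Definition set_eq {X : Type} (A B : set X) : Prop := forall x, A x <-> B x.

Definition ball {X : Type} (E : relation X) (x : X) : set X := fun y => E x y.
Definition img {X : Type} (E : relation X) (A : set X) : set X :=
  fun y => exists a, A a /\ E a y.

(* Ballean axioms.  E o F^{-1} = {(x,y) : exists z, (x,z) in E and (z,y) in F^{-1}}. *)
Definition is_ballean {X : Type} (EE : relation X -> Prop) : Prop :=
  (forall E, EE E -> forall x, E x x) /\
  (forall E F, EE E -> EE F -> exists D, EE D /\
       forall x y, (exists z, E x z /\ F y z) -> D x y) /\
  (forall x y, exists E, EE E /\ E x y).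

Definition bounded {X : Type} (EE : relation X -> Prop) (B : set X) : Prop :=
  exists E x, EE E /\ subset B (ball E x).

Definition asymp_disjoint {X : Type} (EE : relation X -> Prop) (A B : set X) : Prop :=
  forall E, EE E -> bounded EE (fun y => img E A y /\ img E B y).

Definition ultranormal {X : Type} (EE : relation X -> Prop) : Prop :=
  ~ (exists A B : set X, ~ bounded EE A /\ ~ bounded EE B /\ asymp_disjoint EE A B).

Definition discrete {X : Type} (EE : relation X -> Prop) : Prop :=
  ~ bounded EE (fun _ => True) /\
  forall E, EE E -> exists B, bounded EE B /\
     forall x, ~ B x -> set_eq (ball E x) (fun y => y = x).

Definition ultradiscrete {X : Type} (EE : relation X -> Prop) : Prop :=
  discrete EE /\ ultranormal EE.

Definition family (X : Type) := set X -> Prop.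

Definition in_BX {X : Type} (EE : relation X -> Prop) (F : family X) : Prop :=
  forall A, F A -> bounded EE A.

Definition has_ub_BX {X : Type} (EE : relation X -> Prop) (F : family X) : Prop :=
  exists U, bounded EE U /\ forall A, F A -> subset A U.

Definition cofinal_BX {X : Type} (EE : relation X -> Prop) (C : family X) : Prop :=
  in_BX EE C /\ forall B, bounded EE B -> exists A, C A /\ subset B A.

(* Cardinal comparison of families, where a family is viewed as a set of
   subsets of X (subsets identified up to extensional equality):
   |F| <= |G| iff there is an injection F -> G. *)
Definition card_le {X : Type} (F G : family X) : Prop :=
  exists f : set X -> set X,
    (forall A, F A -> G (f A)) /\
    (forall A B, F A -> F B -> set_eq (f A) (f B) -> set_eq A B).

Definition card_lt {X : Type} (F G : family X) : Prop :=
  card_le F G /\ ~ card_le G F.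

(* add(B_X) < cof(B_X): since add(B_X) is the least cardinality of a subfamily
   of B_X without upper bound and cof(B_X) the least cardinality of a cofinal
   subfamily, this holds iff some subfamily without upper bound has cardinality
   strictly smaller than that of every cofinal subfamily. *)
Definition add_lt_cof {X : Type} (EE : relation X -> Prop) : Prop :=
  exists U : family X, in_BX EE U /\ ~ has_ub_BX EE U /\
    forall C, cofinal_BX EE C -> card_lt U C.

From mathcomp Require Import ssreflect ssrfun ssrbool eqtype.
From mathcomp Require Import boolp wochoice.
From Stdlib Require Import Classical ClassicalEpsilon.

Set Implicit Arguments.

(** Well-order X and adjoin a top element, below which the singletons form a
    sequence of bounded sets with unbounded union. Let wa be the least index below
    which some sequence (G j) of bounded sets has unbounded union: the segment below
    wa has cardinality add(B_X), and shorter sequences of bounded sets have bounded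
    unions. A cofinal family has no upper bound, so it is never covered by fewer
    than wa of its members; transfinite recursion then picks wa distinct members of
    it, and {G j} injects into every cofinal family. Conversely there is no cofinal
    sequence (B k)_(k < wa): choose recursively distinct points a_k, b_k outside B k
    and outside all earlier B j, a_j, b_j. The disjoint sets {a_k} and {b_k} lie in
    no B k, so both are unbounded, whereas in an ultradiscrete ballean one of two
    disjoint sets is always bounded. *)

Record strict_well_order (W : Type) (lt : W -> W -> Prop) : Prop := StrictWellOrder {
  swo_trans : forall {u v w}, lt u v -> lt v w -> lt u w;
  swo_trichotomy : forall u v, lt u v \/ u = v \/ lt v u;
  swo_wf : well_founded lt }.

Section WellFounded.
Variables (W : Type) (lt : W -> W -> Prop).
Hypothesis lt_wf : well_founded lt.

Lemma wf_minimal {P : W -> Prop} {w} :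
  P w -> exists m, P m /\ forall v, lt v m -> ~ P v.
Proof.
move=> Pw; apply: NNPP => nomin; move: Pw.
elim/(well_founded_ind lt_wf): w => w IH Pw.
by apply: nomin; exists w; split=> // v /IH.
Qed.

Lemma wf_choice (A : Type) (P : forall w, (forall v, lt v w -> A) -> A -> Prop) :
  inhabited A -> exists h : W -> A,
    forall w, (exists a, P w (fun v _ => h v) a) -> P w (fun v _ => h v) (h w).
Proof.
move=> inhA.
pose F w rec := epsilon inhA (fun a => (exists a', P w rec a') -> P w rec a).
exists (Fix lt_wf (fun _ => A) F) => w [a Pa].
rewrite Fix_eq => [|v f g efg]; last first.
  by rewrite (_ : f = g) //; apply: functional_extensionality_dep => u; apply: funext.
by apply: (epsilon_spec inhA (fun b => _ -> P w _ b)); [exists a | exists a].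
Qed.

End WellFounded.

Lemma exists_strict_well_order (T : Type) : exists lt : T -> T -> Prop, strict_well_order lt.
Proof.
have [R woR] := well_ordering_principle {classic T}.
have R_wo : wo_chain R predT by move=> A _; apply: woR.
have R_total x y : R x y \/ R y x by apply/orP; apply: (wo_chainW R_wo).
have R_anti x y : R x y -> R y x -> x = y.
  by move=> Rxy Ryx; apply: (wo_chain_antisymmetric R_wo) => //; rewrite Rxy Ryx.
have R_least (P : T -> Prop) : (exists x, P x) -> exists m, P m /\ forall y, P y -> R m y.
  move=> [x Px].
  have [m [[/asboolP Pm lbm] _]] := woR [pred z | `[< P z >]] (ex_intro _ x (asboolT Px)).
  by exists m; split=> // y Py; apply: lbm; apply/asboolP.
have R_trans x y z : R x y -> R y z -> R x z.
  move=> Rxy Ryz.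
  have [m [[->|[->|->]] lbm]] :=
    R_least (fun t => t = x \/ t = y \/ t = z) (ex_intro _ x (or_introl erefl)).
  - by apply: lbm; right; right.
  - by rewrite (R_anti x y Rxy (lbm x (or_introl erefl))).
  - by rewrite -(R_anti y z Ryz (lbm y (or_intror (or_introl erefl)))).
exists (fun x y => R x y /\ x <> y); split.
- move=> x y z [Rxy nxy] [Ryz nyz]; split; first exact: R_trans Rxy Ryz.
  by move=> exz; apply: nyz; apply: R_anti => //; rewrite -exz.
- move=> x y; case: (classic (x = y)) => [->|nxy]; first by right; left.
  by case: (R_total x y) => ?; [left | right; right]; split=> // /esym.
- move=> x; apply: NNPP => nacc.
  have [m [naccm lbm]] := R_least (fun t => ~ Acc _ t) (ex_intro _ x nacc).
  apply: naccm; constructor=> v [Rvm nvm]; apply: NNPP => naccv.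
  by apply: nvm; apply: R_anti => //; apply: lbm.
Qed.

Definition lt_top (T : Type) (lt : T -> T -> Prop) (u v : option T) : Prop :=
  match u, v with
  | Some x, Some y => lt x y
  | Some _, None => True
  | None, _ => False
  end.

Lemma strict_well_order_lt_top (T : Type) (lt : T -> T -> Prop) :
  strict_well_order lt -> strict_well_order (lt_top lt).
Proof.
case=> lt_trans lt_tri lt_wf; split.
- by case=> [x|] [y|] [z|] //=; apply: lt_trans.
- case=> [x|] [y|] /=; [|by left|by right; right|by right; left].
  by case: (lt_tri x y) => [xy | [-> | yx]]; [left | right; left | right; right].
- have acc_some x : Acc (lt_top lt) (Some x).
    by elim/(well_founded_ind lt_wf): x => x IH; constructor=> -[y /IH | []].
  by case=> [x|]; [exact: acc_some | constructor=> -[y _ | []]; exact: acc_some].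
Qed.

Section Ballean.
Variables (X : Type) (EE : relation X -> Prop).
Hypothesis EE_ballean : is_ballean EE.

Lemma entourage_refl E : EE E -> forall x, E x x.
Proof. by case: EE_ballean => refl _; apply: refl. Qed.

Lemma entourage_comp E F : EE E -> EE F ->
  exists D, EE D /\ forall u z v, E u z -> F z v -> D u v.
Proof.
case: EE_ballean => _ [comp _] EE_E EE_F.
have [F' [EE_F' F'F]] := comp F F EE_F EE_F.
have [D [EE_D DEF']] := comp E F' EE_E EE_F'.
exists D; split=> // u z v Euz Fzv; apply: DEF'; exists z; split=> //.
by apply: F'F; exists v; split=> //; apply: entourage_refl.
Qed.

Lemma bounded_sub A B : bounded EE B -> subset A B -> bounded EE A.
Proof. by move=> [E [x [EE_E BE]]] AB; exists E, x; split=> // y /AB /BE. Qed.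

Lemma bounded_singleton a : bounded EE (fun y => y = a).
Proof.
case: EE_ballean => _ [_ cover]; have [E [EE_E Eaa]] := cover a a.
by exists E, a; split=> // y ->.
Qed.

Lemma bounded_union A B : bounded EE A -> bounded EE B ->
  bounded EE (fun x => A x \/ B x).
Proof.
move=> [E [x [EE_E AE]]] [F [y [EE_F BF]]].
case: EE_ballean => _ [_ cover]; have [G [EE_G Gxy]] := cover x y.
have [H [EE_H HGF]] := entourage_comp EE_G EE_F.
have [D [EE_D DEH]] := entourage_comp EE_E EE_H.
exists D, x; split=> // z [/AE Exz | /BF Fyz].
- by apply: (DEH x z z) => //; apply: entourage_refl.
- by apply: (DEH x x z); [apply: entourage_refl | apply: HGF Fyz].
Qed.

Lemma bounded_img E B : EE E -> bounded EE B -> bounded EE (img E B).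
Proof.
move=> EE_E [F [x [EE_F BF]]]; have [D [EE_D DFE]] := entourage_comp EE_F EE_E.
by exists D, x; split=> // y [b [/BF Fxb Eby]]; apply: DFE Eby.
Qed.

Lemma ultradiscrete_disjoint_bounded : ultradiscrete EE ->
  forall A B, (forall x, A x -> B x -> False) -> bounded EE A \/ bounded EE B.
Proof.
move=> [[_ disc] ultra] A B disjAB; apply: NNPP => nbnd; apply: ultra; exists A, B.
split; [by move=> ?; apply: nbnd; left | split; [by move=> ?; apply: nbnd; right |]].
move=> E EE_E; have [S [bndS discS]] := disc E EE_E.
(* Off S the E-balls are singletons, so a common point of E[A] and E[B] outside E[S]
   would lie in both A and B. *)
apply: (bounded_sub (bounded_img EE_E bndS)) => y [[a [Aa Eay]] [b [Bb Eby]]].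
case: (classic (S a)) => Sa; first by exists a.
case: (classic (S b)) => Sb; first by exists b.
have ya : y = a by apply/(discS a Sa y).
have yb : y = b by apply/(discS b Sb y).
by case: (disjAB y); [rewrite ya | rewrite yb].
Qed.

Hypothesis X_unbounded : ~ bounded EE (fun _ => True).

Lemma cofinal_no_ub C : cofinal_BX EE C -> ~ has_ub_BX EE C.
Proof.
move=> [_ cofC] [V [bndV ubV]]; apply: X_unbounded; apply: (bounded_sub bndV) => x _.
have [A [CA VA]] := cofC _ (bounded_union bndV (bounded_singleton x)).
by apply: (ubV A CA); apply: VA; right.
Qed.

Lemma exists_notin_bounded S : bounded EE S -> exists x, ~ S x.
Proof.
move=> bndS; apply: NNPP => nex; apply: X_unbounded.
by apply: (bounded_sub bndS) => x _; apply: NNPP => nSx; apply: nex; exists x.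
Qed.

Hypothesis disjoint_bounded :
  forall {A B : set X}, (forall x, A x -> B x -> False) -> bounded EE A \/ bounded EE B.

Lemma bounded_set0 : bounded EE (fun _ => False).
Proof. by case: (@disjoint_bounded (fun _ => False) (fun _ => False) (fun _ f _ => f)). Qed.

Section Threshold.
Variables (W : Type) (lt : W -> W -> Prop).
Hypothesis lt_swo : strict_well_order lt.

Definition unbounded_union_below (w : W) : Prop :=
  exists G : W -> set X, (forall j, lt j w -> bounded EE (G j)) /\
    ~ bounded EE (fun x => exists j, lt j w /\ G j x).

Variable wa : W.
Hypothesis wa_least : forall v, lt v wa -> ~ unbounded_union_below v.

Lemma bounded_union_below k (H : W -> set X) : lt k wa ->
  (forall j, lt j k -> bounded EE (H j)) -> bounded EE (fun x => exists j, lt j k /\ H j x).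
Proof. by move=> kwa bndH; apply: NNPP => nbnd; apply: (wa_least kwa); exists H. Qed.

Lemma cofinal_injective_sequence C : cofinal_BX EE C -> exists h : W -> set X,
  forall k, lt k wa -> C (h k) /\ forall j, lt j k -> ~ set_eq (h k) (h j).
Proof.
move=> cofC.
have [h hP] := wf_choice (swo_wf lt_swo)
  (fun k rec c => C c /\ forall j (jk : lt j k), ~ set_eq c (rec j jk))
  (inhabits (fun _ : X => False)).
exists h => k; elim/(well_founded_ind (swo_wf lt_swo)): k => k IH kwa.
apply: hP; apply: NNPP => nnew; apply: (cofinal_no_ub cofC).
exists (fun x => exists j, lt j k /\ h j x); split.
- apply: bounded_union_below => // j jk.
  by have [Chj _] := IH j jk (swo_trans lt_swo jk kwa); apply: (proj1 cofC).
- move=> A CA x Ax; apply: NNPP => nx; apply: nnew; exists A; split=> // j jk eqA.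
  by apply: nx; exists j; split=> //; apply/eqA.
Qed.

Definition fresh_point (B : W -> set X) (h : W -> X * X) k x : Prop :=
  ~ B k x /\ forall j, lt j k -> ~ B j x /\ x <> (h j).1 /\ x <> (h j).2.

Lemma exists_fresh_pairs {B : W -> set X} :
  (forall k, lt k wa -> bounded EE (B k)) -> exists h : W -> X * X, forall k, lt k wa ->
    (h k).1 <> (h k).2 /\ fresh_point B h k (h k).1 /\ fresh_point B h k (h k).2.
Proof.
move=> bndB; have [_ [x0 _]] := bounded_set0.
pose fresh k (rec : forall j, lt j k -> X * X) x :=
  ~ B k x /\ forall j (jk : lt j k), ~ B j x /\ x <> (rec j jk).1 /\ x <> (rec j jk).2.
have [h hP] := wf_choice (swo_wf lt_swo)
  (fun k rec p => p.1 <> p.2 /\ fresh k rec p.1 /\ fresh k rec p.2) (inhabits (x0, x0)).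
exists h => k kwa; apply: hP.
pose S x := B k x \/ exists j, lt j k /\ (B j x \/ x = (h j).1 \/ x = (h j).2).
have bndS : bounded EE S.
  apply: bounded_union; first exact: bndB.
  apply: bounded_union_below => // j jk.
  apply: bounded_union; first by apply: bndB; apply: swo_trans jk kwa.
  by apply: bounded_union; apply: bounded_singleton.
have fresh_out x : ~ S x -> fresh_point B h k x.
  move=> nSx; split=> [Bx | j jk]; first by apply: nSx; left.
  by split; [|split] => ?; apply: nSx; right; exists j; tauto.
have [a Sa] := exists_notin_bounded bndS.
have [b Sab] := exists_notin_bounded (bounded_union bndS (bounded_singleton a)).
exists (a, b); split=> [/= ab | ]; first by apply: Sab; right.
by split; apply: fresh_out => // Sb; apply: Sab; left.
Qed.

Lemma no_cofinal_sequence_below (B : W -> set X) :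
  (forall k, lt k wa -> bounded EE (B k)) ->
  ~ (forall S, bounded EE S -> exists k, lt k wa /\ subset S (B k)).
Proof.
move=> bndB cofB; have [h h_fresh] := exists_fresh_pairs bndB.
pose P1 x := exists k, lt k wa /\ x = (h k).1.
pose P2 x := exists k, lt k wa /\ x = (h k).2.
have disj12 x : P1 x -> P2 x -> False.
  move=> [k [kwa ->]] [j [jwa e]].
  have [nek [[_ freshk] _]] := h_fresh k kwa.
  have [_ [_ [_ freshj]]] := h_fresh j jwa.
  case: (swo_trichotomy lt_swo j k) => [jk | [ejk | kj]].
  - by case: (freshk j jk) => _ [_ ne]; apply: ne e.
  - by apply: nek; rewrite e ejk.
  - by case: (freshj k kj) => _ [ne _]; apply: ne (esym e).
case: (disjoint_bounded disj12) => /cofB [k [kwa sub]];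
  have [_ [[Bk1 _] [Bk2 _]]] := h_fresh k kwa.
- by apply: Bk1; apply: sub; exists k.
- by apply: Bk2; apply: sub; exists k.
Qed.

Definition range_below (G : W -> set X) : family X :=
  fun A => exists j, lt j wa /\ A = G j.

Lemma card_le_range_below G C : cofinal_BX EE C -> card_le (range_below G) C.
Proof.
move=> cofC; have [h hC] := cofinal_injective_sequence cofC.
pose idx A := epsilon (inhabits wa) (fun j => lt j wa /\ A = G j).
have idxP A : range_below G A -> lt (idx A) wa /\ A = G (idx A) by apply: epsilon_spec.
exists (fun A => h (idx A)).
split=> [A /idxP [iA _] | A A' /idxP [iA eA] /idxP [iA' eA'] eqh].
  by case: (hC _ iA).
rewrite eA eA'; suff -> : idx A = idx A' by move=> x.
case: (swo_trichotomy lt_swo (idx A) (idx A')) => [lt_AA' | [// | lt_A'A]].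
- by case: (hC _ iA') => _ /(_ _ lt_AA'); case=> x; split=> /eqh.
- by case: (hC _ iA) => _ /(_ _ lt_A'A).
Qed.

Lemma not_card_le_range_below G C : cofinal_BX EE C -> ~ card_le C (range_below G).
Proof.
move=> [C_bnd cofC] [f [fC f_inj]].
(* f is injective only up to set_eq, so B k is the common value of all c with f c = G k. *)
apply: (@no_cofinal_sequence_below (fun k x => exists c, C c /\ f c = G k /\ c x)).
- move=> k _; case: (classic (exists c0, C c0 /\ f c0 = G k)) => [[c0 [Cc0 fc0]] | none].
    apply: (bounded_sub (C_bnd _ Cc0)) => x [c [Cc [fc cx]]].
    by apply/(f_inj c c0 Cc Cc0 _ x) => //; rewrite fc fc0.
  by apply: (bounded_sub bounded_set0) => x [c [Cc [fc _]]]; apply: none; exists c.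
- move=> S bndS; have [c [Cc Sc]] := cofC S bndS; have [j [jwa fc]] := fC c Cc.
  by exists j; split=> // x Sx; exists c; split=> //; split=> //; apply: Sc.
Qed.

Lemma add_lt_cof_of_least_unbounded_union : unbounded_union_below wa -> add_lt_cof EE.
Proof.
move=> [G [bndG unbG]]; exists (range_below G); split; [|split].
- by move=> A [j [jwa ->]]; apply: bndG.
- move=> [V [bndV ubV]]; apply: unbG; apply: (bounded_sub bndV) => x [j [jwa Gx]].
  by apply: (ubV (G j)) => //; exists j.
- by move=> C cofC; split; [apply: card_le_range_below | apply: not_card_le_range_below].
Qed.

End Threshold.
End Ballean.

Theorem proposition6p2 (X : Type) (EE : relation X -> Prop) :
  is_ballean EE -> ultradiscrete EE -> add_lt_cof EE.
Proof.
move=> EE_ballean ud; have [[X_unbounded _] _] := ud.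
have [lt lt_swo] := exists_strict_well_order X.
have top_swo := strict_well_order_lt_top lt_swo.
have top_unbounded : unbounded_union_below EE (lt_top lt) None.
  exists (fun w x => w = Some x); split=> [[x|] // _ | bnd].
    by apply: (bounded_sub (bounded_singleton EE_ballean x)) => y [->].
  by apply: X_unbounded; apply: (bounded_sub bnd) => x _; exists (Some x).
have [wa [wa_unbounded wa_least]] := wf_minimal (swo_wf top_swo) top_unbounded.
exact: (add_lt_cof_of_least_unbounded_union EE_ballean X_unbounded
  (ultradiscrete_disjoint_bounded EE_ballean ud) top_swo wa_least wa_unbounded).
Qed.
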